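(* Let $\delta_1,\delta_2>0$, and let $\mathcal C_{\delta_1}$ and $\mathcal C_{\delta_2}$ be finite nonempty families of cubes from the $\delta_1$-grid and the $\delta_2$-grid of $\mathbb R^n$ respectively. Let $[L,X_f]$ and $[L,Y_f]$ be random affine contractions on $\mathbb R^n$ (with the same random linear part $L$) such that $X_f$ is uniformly distributed on $\bigcup\mathcal C_{\delta_1}$ and $Y_f$ is uniformly distributed on $\bigcup\mathcal C_{\delta_2}$. Then for every $m\in M_{\delta_1}=\{k\in\mathbb Z^n:C_{\delta_1}(k)\in\mathcal C_{\delta_1}\}$, the distribution of $\mathcal M^\#[L,Y_f]$ (computed with respect to $\delta_2$) equals the conditional distribution of $\mathcal M^\#[L,X_f]$ (computed with respect to $\delta_1$) given $X_f\in C_{\delta_1}(m)$.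
   Context: Let $d$ be a metric on $\mathbb R^n$ induced by a norm $\|\cdot\|$. For $\delta>0$ and $m\in\mathbb Z^n$, $C_\delta(m)=\prod_{j=1}^n[(m_j-\tfrac12)\delta,(m_j+\tfrac12)\delta)$; the $\delta$-grid is the set of all these cubes; $\mathcal D^n(\delta)=\{\delta m:m\in\mathbb Z^n\}$. The $\delta$-roundoff of $x$ is $\tilde x=\delta m$ where $x\in C_\delta(m)$, and of a map $w$ is $\tilde w(\tilde x)=\widetilde{w(\tilde x)}$ on $\mathcal D^n(\delta)$. A random affine contraction $[L,Z]$ is a pair of independent random variables, $Z\in\mathbb R^n$ and $L$ an $n\times n$ random matrix with induced operator norm $\|L\|<1$, viewed as the map $x\mapsto L(x-Z)+Z$. For nonempty $C$ with $\tilde w(C)\subset C$, $\Lambda\subset C$ is absorbing for $\tilde w$ in $C$ if every orbit of a point of $C$ eventually stays in $\Lambda$; the minimal absorbing set is the intersection of all absorbing sets in $\mathcal D^n(\delta)$ (it exists and is finite for roundoffs of contractions). $\mathcal M^\#[L,Z]$ denotes the cardinality of the minimal absorbing set of the roundoff of $[L,Z]$; here for $[L,X_f]$ the $\delta_1$-roundoff and for $[L,Y_f]$ the $\delta_2$-roundoff is used. *)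

From mathcomp Require Import all_boot all_algebra.
From mathcomp Require Import finmap all_classical all_reals all_analysis.
Import GRing.Theory Num.Theory.
Set Implicit Arguments. Unset Strict Implicit. Unset Printing Implicit Defensive.
Local Open Scope classical_set_scope.
Local Open Scope ring_scope.

Section Defs.
Variable R : realType.
Variable n : nat.

Definition is_norm (nrm : 'cV[R]_n -> R) : Prop :=
  [/\ forall x, nrm x = 0 -> x = 0,
      forall (a : R) x, nrm (a *: x) = `|a| * nrm x
    & forall x y, nrm (x + y) <= nrm x + nrm y].

Definition opnorm (nrm : 'cV[R]_n -> R) (L : 'M[R]_n) : R :=
  sup [set nrm (L *m x) | x in [set x | nrm x <= 1]].

Definition cube (delta : R) (m : 'cV[int]_n) : set 'cV[R]_n :=
  [set x | forall i : 'I_n,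
     ((m i 0)%:~R - 2^-1) * delta <= x i 0 /\ x i 0 < ((m i 0)%:~R + 2^-1) * delta].

Definition grid (delta : R) : set 'cV[R]_n :=
  [set x | exists m : 'cV[int]_n, x = delta *: map_mx (fun k : int => k%:~R) m].

(* delta-roundoff: x~ = delta m where x \in C_delta(m), i.e. m_j = floor(x_j/delta + 1/2) *)
Definition roundoff (delta : R) (x : 'cV[R]_n) : 'cV[R]_n :=
  delta *: \col_i ((Num.floor (x i 0 / delta + 2^-1))%:~R).

Definition affmap (L : 'M[R]_n) (z : 'cV[R]_n) (x : 'cV[R]_n) : 'cV[R]_n :=
  L *m (x - z) + z.

Definition roundmap (delta : R) (w : 'cV[R]_n -> 'cV[R]_n) (x : 'cV[R]_n) :=
  roundoff delta (w x).

Definition absorbing (delta : R) (f : 'cV[R]_n -> 'cV[R]_n) (Lam : set 'cV[R]_n) :=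
  Lam `<=` grid delta /\
  forall x, grid delta x -> exists N : nat, forall k : nat, (N <= k)%N -> Lam (iter k f x).

Definition minabs (delta : R) (f : 'cV[R]_n -> 'cV[R]_n) : set 'cV[R]_n :=
  [set x | forall Lam, absorbing delta f Lam -> Lam x].

(* M^#[L, z]: cardinality of the minimal absorbing set of the delta-roundoff
   (fset_set gives the empty fset for an infinite set; the set is finite here) *)
Definition Mcard (delta : R) (L : 'M[R]_n) (z : 'cV[R]_n) : nat :=
  (#|` fset_set (minabs delta (roundmap delta (affmap L z))) |)%fset.

End Defs.

Section Prob.
Variables (d : measure_display) (T : measurableType d) (R : realType).

Definition gen_sigma (I : Type) (f : I -> T -> R) : set (set T) :=
  <<s [set A | exists i B, measurable B /\ A = f i @^-1` B] >>.

Definition indep (P : probability T R) (F G : set (set T)) : Prop :=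
  forall A B, F A -> G B -> P (A `&` B) = (P A * P B)%E.

Variable n : nat.

Definition random_matrix (L : T -> 'M[R]_n) :=
  forall i j, measurable_fun setT (fun w => L w i j).
Definition random_vector (X : T -> 'cV[R]_n) :=
  forall i, measurable_fun setT (fun w => X w i 0).

Definition indep_mx_vec (P : probability T R) (L : T -> 'M[R]_n) (X : T -> 'cV[R]_n) :=
  indep P (gen_sigma (fun ij : 'I_n * 'I_n => fun w => L w ij.1 ij.2))
          (gen_sigma (fun i : 'I_n => fun w => X w i 0)).

Definition random_affine_contraction (P : probability T R) (nrm : 'cV[R]_n -> R)
    (L : T -> 'M[R]_n) (Z : T -> 'cV[R]_n) :=
  [/\ random_matrix L, random_vector Z, indep_mx_vec P L Z
    & forall w, opnorm nrm (L w) < 1].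

(* X is uniformly distributed on the union of the cubes C_delta(m), m in M
   (M a duplicate-free list of indices): the law of X is normalized Lebesgue
   measure on the union, determined by its values on measurable rectangles
   prod_i B_i, where lambda^n(prod_i B_i /\ C_delta(m)) =
   prod_i lambda(B_i /\ [(m_i - 1/2) delta, (m_i + 1/2) delta[) and
   lambda^n(union) = |M| delta^n. *)
Definition uniform_on_cubes (P : probability T R) (X : T -> 'cV[R]_n)
    (delta : R) (M : seq 'cV[int]_n) :=
  forall B : 'I_n -> set R, (forall i, measurable (B i)) ->
    P [set w | forall i, B i (X w i 0)] =
    ((\sum_(m <- M) \prod_(i < n)
        fine (lebesgue_measure (B i `&`
          `[((m i 0)%:~R - 2^-1) * delta, ((m i 0)%:~R + 2^-1) * delta[%classic)))
     / ((size M)%:R * delta ^+ n))%:E.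

End Prob.

From HB Require Import structures.
From mathcomp Require Import all_boot all_algebra.
From mathcomp Require Import finmap all_classical all_reals all_analysis.
From mathcomp Require Import ring lra.
Import order.Order.TTheory GRing.Theory Num.Theory.
Set Implicit Arguments. Unset Strict Implicit. Unset Printing Implicit Defensive.
Local Open Scope classical_set_scope.
Local Open Scope ring_scope.

(* Write z = delta (k + h) with k integral and h = cfrac (z / delta) in [-1/2, 1/2)^n.
   On the grid delta Z^n the delta-roundoff of x |-> L (x - z) + z is conjugate, through
   k |-> delta k and an integer translation, to the map k |-> round (L (k - h) + h) on Z^n.
   Hence M^#[L, z] is a measurable function of (L, h) alone, whatever delta is.
   When Z is uniform on a union of delta-cubes and independent of L, the vector
   h(Z) is uniform on [-1/2, 1/2)^n and independent of L, also conditionally on Z lying in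
   one given cube.  So (L, h(Y)) has the conditional law of (L, h(X)) given
   X in C_delta1(m); the two laws are compared on the pi-system of rectangles. *)

Lemma fset_set_infinite (T : choiceType) (A : set T) :
  ~ finite_set A -> fset_set A = fset0%fset.
Proof. by move=> infA; rewrite /fset_set; case: pselect. Qed.

Lemma card_fset_set_inj (T U : choiceType) (f : T -> U) (A : set T) :
  injective f -> #|` fset_set (f @` A)|%fset = #|` fset_set A|%fset.
Proof.
move=> f_inj; have [finA|infA] := pselect (finite_set A).
  by rewrite fset_set_image // card_imfset.
have inffA : ~ finite_set (f @` A).
  by rewrite (eq_finite_set (inj_card_eq (in2W f_inj))).
by rewrite !fset_set_infinite.
Qed.

Definition periodic_points (T : Type) (f : T -> T) : set T :=
  [set x | exists p : nat, iter p.+1 f x = x].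

Lemma iter_conj (T U : Type) (f : U -> U) (g : T -> T) (phi : T -> U) :
  (forall x, f (phi x) = phi (g x)) -> forall p x, iter p f (phi x) = phi (iter p g x).
Proof. by move=> fg; elim=> [|p IH] x //=; rewrite IH fg. Qed.

Lemma periodic_points_conj (T U : Type) (f : U -> U) (g : T -> T) (phi : T -> U) :
  injective phi -> (forall x, f (phi x) = phi (g x)) ->
  periodic_points f `&` range phi = phi @` periodic_points g.
Proof.
move=> phi_inj /iter_conj fg; apply/seteqP; split => y.
  by move=> [[p hp] [x _ exy]]; exists x => //; exists p; apply: phi_inj; rewrite -fg exy.
by move=> [x [p hp] <-]; split; [exists p; rewrite fg hp | exists x].
Qed.

Section MinimalAbsorbing.
Variables (R : realType) (n : nat) (delta : R) (f : 'cV[R]_n -> 'cV[R]_n).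

Lemma periodic_absorbing (Lam : set 'cV[R]_n) x :
  absorbing delta f Lam -> grid delta x -> periodic_points f x -> Lam x.
Proof.
move=> [_ absLam] gx [p hp]; have [N hN] := absLam x gx.
have iter_period k : iter (k * p.+1) f x = x.
  by elim: k => [|k IH] //; rewrite mulSn iterD IH hp.
by rewrite -(iter_period N); apply: hN; rewrite leq_pmulr.
Qed.

Hypothesis f_grid : forall x, grid delta x -> grid delta (f x).

Lemma grid_iter k x : grid delta x -> grid delta (iter k f x).
Proof. by elim: k => [|k IH] //= gx; apply/f_grid/IH. Qed.

Lemma absorbing_grid : absorbing delta f (grid delta).
Proof. by split => // x gx; exists 0%N => k _; apply: grid_iter. Qed.

(* An orbit that visits a non-periodic point [x] never returns to it. *)
Lemma absorbing_gridD1 x :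
  ~ periodic_points f x -> absorbing delta f (grid delta `\ x).
Proof.
move=> xNper; split=> [y [] //|y gy].
have [[k0 hk0]|yNx] := pselect (exists k0, iter k0 f y = x).
  exists k0.+1 => k hk; split; first exact: grid_iter.
  move=> /= ekx; apply: xNper; exists (k - k0.+1)%N.
  by rewrite -[in LHS]hk0 -iterD addSn -addnS subnK.
exists 0%N => k _; split; first exact: grid_iter.
by move=> ekx; apply: yNx; exists k.
Qed.

Lemma minabs_periodic : minabs delta f = grid delta `&` periodic_points f.
Proof.
apply/seteqP; split => x.
  move=> mx; have gx : grid delta x := mx _ absorbing_grid.
  by split => //; apply: contrapT => /absorbing_gridD1 /mx [_]; apply.
by move=> [gx px] Lam absLam; apply: periodic_absorbing.
Qed.

End MinimalAbsorbing.

Section UnitGrid.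
Variables (R : realType) (n : nat).

Definition intcv (k : 'cV[int]_n) : 'cV[R]_n := map_mx (fun x : int => x%:~R) k.

Definition round_half (x : R) : int := Num.floor (x + 2^-1).

Definition cfrac (x : R) : R := x - (round_half x)%:~R.

Definition unit_roundmap (l : 'M[R]_n) (u : 'cV[R]_n) (k : 'cV[int]_n) : 'cV[int]_n :=
  \col_i round_half (affmap l u (intcv k) i 0).

Definition nperiodic (l : 'M[R]_n) (u : 'cV[R]_n) : nat :=
  #|` fset_set (periodic_points (unit_roundmap l u))|%fset.

Lemma intcv_inj : injective intcv.
Proof.
move=> a b /matrixP eab; apply/matrixP => i j.
by have := eab i j; rewrite !mxE => /intr_inj.
Qed.

Lemma intcvD (j k : 'cV[int]_n) : intcv (j + k) = intcv j + intcv k.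
Proof. by apply/matrixP => i i'; rewrite !mxE rmorphD. Qed.

Lemma grid_roundoff (delta : R) (x : 'cV[R]_n) : grid delta (roundoff delta x).
Proof.
exists (\col_i Num.floor (x i 0 / delta + 2^-1)).
by congr (_ *: _); apply/matrixP => i j; rewrite !mxE.
Qed.

Lemma affmapZ (l : 'M[R]_n) (a : R) (u x : 'cV[R]_n) :
  affmap l (a *: u) (a *: x) = a *: affmap l u x.
Proof. by rewrite /affmap -scalerBr -scalemxAr scalerDr. Qed.

Lemma roundmap_affmap_grid (delta : R) (l : 'M[R]_n) (z : 'cV[R]_n) k :
  delta != 0 ->
  roundmap delta (affmap l z) (delta *: intcv k) =
  delta *: intcv (unit_roundmap l (delta^-1 *: z) k).
Proof.
move=> d0; rewrite /roundmap /roundoff -{1}[z](scalerKV d0) affmapZ.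
by congr (_ *: _); apply/matrixP => i j; rewrite !mxE mulrC mulKf.
Qed.

Lemma Mcard_nperiodic (delta : R) (l : 'M[R]_n) (z : 'cV[R]_n) : delta != 0 ->
  Mcard delta l z = nperiodic l (delta^-1 *: z).
Proof.
move=> d0; pose phi k := delta *: intcv k.
have phi_inj : injective phi by move=> a b /(scalerI d0) /intcv_inj.
have grid_phi : grid delta = range phi.
  by apply/seteqP; split => [x [m ->]|x [m _ <-]]; exists m.
rewrite /Mcard minabs_periodic; last by move=> x _; apply: grid_roundoff.
rewrite grid_phi setIC (periodic_points_conj (g := unit_roundmap l (delta^-1 *: z)))//.
  exact: card_fset_set_inj.
by move=> k; apply: roundmap_affmap_grid.
Qed.

Lemma unit_roundmap_shift (l : 'M[R]_n) (u : 'cV[R]_n) (j k : 'cV[int]_n) :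
  unit_roundmap l (u + intcv j) (k + j) = unit_roundmap l u k + j.
Proof.
rewrite /unit_roundmap.
have -> : affmap l (u + intcv j) (intcv (k + j)) = affmap l u (intcv k) + intcv j.
  by rewrite /affmap intcvD opprD addrACA subrr addr0 addrA.
apply/matrixP => i i'; rewrite !mxE (ord1 i') /round_half addrAC.
by rewrite floorDrz ?intr_int // intrKfloor.
Qed.

Lemma nperiodic_shift (l : 'M[R]_n) (u : 'cV[R]_n) (j : 'cV[int]_n) :
  nperiodic l (u + intcv j) = nperiodic l u.
Proof.
rewrite /nperiodic -[periodic_points _]setIT.
have <- : range (+%R^~ j) = [set: 'cV[int]_n].
  by apply/seteqP; split => // k _; exists (k - j); rewrite ?subrK.
rewrite (periodic_points_conj (g := unit_roundmap l u) (addIr j)).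
  exact/card_fset_set_inj/addIr.
exact: unit_roundmap_shift.
Qed.

Lemma Mcard_cfrac (delta : R) (l : 'M[R]_n) (z : 'cV[R]_n) : delta != 0 ->
  Mcard delta l z = nperiodic l (map_mx cfrac (delta^-1 *: z)).
Proof.
move=> d0; rewrite Mcard_nperiodic //; set v := delta^-1 *: z.
have vE : v = map_mx cfrac v + intcv (map_mx round_half v).
  by apply/matrixP => i j; rewrite !mxE /cfrac subrK.
by rewrite {1}vE nperiodic_shift.
Qed.

End UnitGrid.

Definition param (R : realType) (n : nat) := ('M[R]_n * 'cV[R]_n)%type.
HB.instance Definition _ (R : realType) n := Choice.on (param R n).
HB.instance Definition _ (R : realType) n := isPointed.Build (param R n) (0, 0).

Section ParamSpace.
Variables (R : realType) (n : nat).

Definition above (o : option R) (x : R) : Prop := if o is Some a then a <= x else True.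

(* A pi-system containing [setT] whose preimages under (L, h) split into an event of L
   and an event of h. *)
Definition rect (a : 'I_n -> 'I_n -> option R) (b : 'I_n -> option R) : set (param R n) :=
  [set w : param R n |
    (forall r s, above (a r s) (w.1 r s)) /\ (forall r, above (b r) (w.2 r 0))].

Definition rects : set (set (param R n)) := [set S | exists a b, S = rect a b].

End ParamSpace.

Notation Param R n := (g_sigma_algebraType (@rects R n)).

Section ParamMeasurability.
Variables (R : realType) (n : nat).

Lemma measurable_rect a b : measurable (rect a b : set (Param R n)).
Proof. by apply: sub_sigma_algebra; exists a, b. Qed.

Lemma rects_setI_closed : setI_closed (@rects R n).
Proof.
pose om (o o' : option R) := match o, o' with
  | Some x, Some y => Some (Num.max x y) | Some x, None => Some x | None, o'' => o'' end.
have omE o o' v : above (om o o') v <-> above o v /\ above o' v.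
  case: o o' => [x|] [y|] //=; last by split=> [|[]].
  - by rewrite ge_max; split=> [/andP|[->->]].
  - by split=> [|[]].
move=> _ _ [a [b ->]] [a' [b' ->]].
exists (fun r s => om (a r s) (a' r s)), (fun r => om (b r) (b' r)).
apply/seteqP; split => w /=.
  by move=> [[h1 h2] [h1' h2']]; split => [r s|r]; apply/omE.
move=> [h1 h2]; split; split=> [r s|r];
  by [case/omE: (h1 r s) | case/omE: (h2 r)].
Qed.

Lemma measurable_fun_rect (f : Param R n -> R) :
  (forall x, exists a b, f @^-1` `[x, +oo[ = rect a b) -> measurable_fun setT f.
Proof.
move=> frect; apply: (measurability _ (measurable_realfun.RGenCInfty.measurableE R)).
move=> _ [_ [x ->] <-]; have [a [b fE]] := frect x.
by rewrite setTI fE; apply: measurable_rect.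
Qed.

Lemma measurable_entry_mx r s : measurable_fun setT (fun w : Param R n => w.1 r s).
Proof.
apply: measurable_fun_rect => x.
exists (fun r' s' => if (r', s') == (r, s) then Some x else None), (fun _ => None).
apply/seteqP; split => w /=; rewrite in_itv /= andbT.
  by move=> h; split => // r' s'; case: eqP => // -[-> ->].
by move=> [h _]; have := h r s; rewrite eqxx.
Qed.

Lemma measurable_entry_cv r : measurable_fun setT (fun w : Param R n => w.2 r 0).
Proof.
apply: measurable_fun_rect => x.
exists (fun _ _ => None), (fun r' => if r' == r then Some x else None).
apply/seteqP; split => w /=; rewrite in_itv /= andbT.
  by move=> h; split => // r'; case: eqP => // ->.
by move=> [_ h]; have := h r; rewrite eqxx.
Qed.

End ParamMeasurability.

Section MeasurableSets.
Variables (d : measure_display) (T : measurableType d).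

Lemma countable_bigcapT_measurable (I : countType) (F : I -> set T) :
  (forall i, measurable (F i)) -> measurable (\bigcap_i F i).
Proof.
move=> mF; rewrite -[X in measurable X]setCK setC_bigcap; apply: measurableC.
by apply: countable_bigcupT_measurable => // i; apply: measurableC.
Qed.

Lemma measurable_propI (Q : Prop) (E : set T) :
  measurable E -> measurable [set w | Q /\ E w].
Proof.
move=> mE; have [q|nq] := pselect Q.
  by rewrite (_ : [set _ | _] = E) //; apply/seteqP; split => w //= [].
by rewrite (_ : [set _ | _] = set0) //; apply/seteqP; split => w //= [].
Qed.

End MeasurableSets.

Section NperiodicMeasurable.
Variables (R : realType) (n : nat).
Local Notation Param := (Param R n).

Lemma measurable_affmap_entry (k : 'cV[int]_n) r :
  measurable_fun setT (fun w : Param => affmap w.1 w.2 (intcv R k) r 0).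
Proof.
have -> : (fun w : Param => affmap w.1 w.2 (intcv R k) r 0) =
    (fun w => \sum_s w.1 r s * ((k s 0)%:~R - w.2 s 0) + w.2 r 0).
  by apply/funext => w; rewrite !mxE; congr (_ + _); apply: eq_bigr => s _; rewrite !mxE.
apply: measurable_realfun.measurable_funD; last exact: measurable_entry_cv.
apply: measurable_sum => s; apply: measurable_realfun.measurable_funM.
  exact: measurable_entry_mx.
by apply: measurable_realfun.measurable_funB => //; exact: measurable_entry_cv.
Qed.

Lemma measurable_unit_roundmap_eq (k j : 'cV[int]_n) :
  measurable [set w : Param | unit_roundmap w.1 w.2 k = j].
Proof.
have -> : [set w : Param | unit_roundmap w.1 w.2 k = j] = \bigcap_(r in [set: 'I_n])
    ((fun w : Param => affmap w.1 w.2 (intcv R k) r 0 + 2^-1) @^-1`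
       `[(j r 0)%:~R, (j r 0 + 1)%:~R[%classic).
  apply/seteqP; split => w /=.
    by move=> <- r _ /=; rewrite in_itv /= mxE; exact: floor_itv.
  move=> h; apply/matrixP => r c; rewrite mxE (ord1 c).
  by apply/eqP; rewrite floor_eq; have := h r I; rewrite /= in_itv.
apply: fin_bigcap_measurable => // r _; rewrite -[X in measurable X]setTI.
apply: measurable_realfun.measurable_funD => //; exact: measurable_affmap_entry.
Qed.

Lemma measurable_iter_unit_roundmap_eq p (k j : 'cV[int]_n) :
  measurable [set w : Param | iter p (unit_roundmap w.1 w.2) k = j].
Proof.
elim: p j => [|p IH] j /=.
  have [->|kj] := eqVneq k j; first by rewrite (_ : [set _ | _] = setT) //; apply/seteqP.
  rewrite (_ : [set _ | _] = set0) //; apply/seteqP; split => // w /= kjE.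
  by rewrite kjE eqxx in kj.
have -> : [set w : Param | unit_roundmap w.1 w.2 (iter p (unit_roundmap w.1 w.2) k) = j] =
    \bigcup_i ([set w : Param | iter p (unit_roundmap w.1 w.2) k = i] `&`
               [set w : Param | unit_roundmap w.1 w.2 i = j]).
  apply/seteqP; split => [w /= kj|w [i _ [/= -> //]]].
  by exists (iter p (unit_roundmap w.1 w.2) k).
apply: countable_bigcupT_measurable => // i.
by apply: measurableI; [exact: IH | exact: measurable_unit_roundmap_eq].
Qed.

Lemma measurable_periodic (k : 'cV[int]_n) :
  measurable [set w : Param | periodic_points (unit_roundmap w.1 w.2) k].
Proof.
have -> : [set w : Param | periodic_points (unit_roundmap w.1 w.2) k] =
   \bigcup_(p : nat) [set w : Param | iter p.+1 (unit_roundmap w.1 w.2) k = k].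
  by apply/seteqP; split => w /= [p hp]; exists p.
by apply: bigcupT_measurable => p; apply: measurable_iter_unit_roundmap_eq.
Qed.

Lemma measurable_periodic_eq (F : {fset 'cV[int]_n}%fset) :
  measurable [set w : Param | periodic_points (unit_roundmap w.1 w.2) = [set` F]].
Proof.
have -> : [set w : Param | periodic_points (unit_roundmap w.1 w.2) = [set` F]] =
   \bigcap_(k : 'cV[int]_n)
     (if k \in F then [set w : Param | periodic_points (unit_roundmap w.1 w.2) k]
      else ~` [set w : Param | periodic_points (unit_roundmap w.1 w.2) k]).
  apply/seteqP; split => w /=.
    by move=> e k _; case: ifP => kF /=; rewrite e /= kF.
  move=> h; apply/seteqP; split => k /=.
    by have := h k I; case: ifP => // _ nk /nk.
  by move=> kF; have := h k I; rewrite kF.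
apply: countable_bigcapT_measurable => k.
by case: ifP => _; [|apply: measurableC]; exact: measurable_periodic.
Qed.

Lemma measurable_nperiodic (A : set nat) :
  measurable [set w : Param | A (nperiodic w.1 w.2)].
Proof.
pose per (F : {fset 'cV[int]_n}%fset) :=
  [set w : Param | periodic_points (unit_roundmap w.1 w.2) = [set` F]].
have mper F : measurable (per F) by exact: measurable_periodic_eq.
have -> : [set w : Param | A (nperiodic w.1 w.2)] =
    (\bigcup_(F : {fset 'cV[int]_n}%fset) [set w | A #|` F|%fset /\ per F w]) `|`
    [set w | A 0%N /\ (~` \bigcup_(F : {fset 'cV[int]_n}%fset) per F) w].
  apply/seteqP; split => w /=; rewrite /nperiodic /per; set S := periodic_points _.
  - have [finS|infS] := pselect (finite_set S).
      by move=> hA; left; exists (fset_set S) => //; rewrite fset_setK.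
    rewrite fset_set_infinite // cardfs0 => hA; right; split => // -[F _ /= SF].
    by apply: infS; rewrite /S SF; exact: finite_fset.
  - move=> [[F _ [hA SF]]|[hA nF]]; first by rewrite /S SF set_fsetK.
    have infS : ~ finite_set S by move=> /finite_fsetP [F SF]; apply: nF; exists F.
    by rewrite (fset_set_infinite infS) cardfs0.
apply: measurableU; last first.
  by apply: measurable_propI; apply: measurableC; apply: countable_bigcupT_measurable.
by apply: countable_bigcupT_measurable => // F; apply: measurable_propI.
Qed.

End NperiodicMeasurable.

Section CenteredFraction.
Variable R : realType.

Definition above_inf (o : option R) : R :=
  if o is Some a then Num.max a (- 2^-1) else - 2^-1.

Definition above_len (o : option R) : R :=
  if above_inf o < 2^-1 then 2^-1 - above_inf o else 0.

Definition above_itv (delta : R) (o : option R) (j : int) : set R :=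
  `[(j%:~R + above_inf o) * delta, (j%:~R + 2^-1) * delta[%classic.

Definition cfrac_above (delta : R) (o : option R) : set R :=
  \bigcup_(j : int) above_itv delta o j.

Lemma above_inf_ge o : - 2^-1 <= above_inf o.
Proof. by case: o => [a|] //=; rewrite le_max lexx orbT. Qed.

Lemma above_infP o (v : R) : - 2^-1 <= v -> above o v <-> above_inf o <= v.
Proof. by case: o => [a|] //= hv; rewrite ge_max hv andbT. Qed.

Lemma round_halfP (x : R) (j : int) :
  round_half x = j <-> j%:~R - 2^-1 <= x < j%:~R + 2^-1.
Proof.
rewrite /round_half; split => [<-|/andP[h1 h2]].
  by have /andP[] := floor_itv (x + 2^-1); rewrite intrD => h1 h2; apply/andP; split; lra.
by apply/eqP; rewrite floor_eq intrD; apply/andP; split; lra.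
Qed.

Lemma above_itvP (delta : R) o j y : 0 < delta ->
  above_itv delta o j y <->
  round_half (delta^-1 * y) = j /\ above o (cfrac (delta^-1 * y)).
Proof.
move=> dp; rewrite /above_itv /= in_itv /= /cfrac.
rewrite -!(mulrC delta) -ler_pdivlMl // -ltr_pdivrMl //.
set x := delta^-1 * y; have hinf := above_inf_ge o.
split => [/andP[h1 h2]|[hj]].
  have hj : round_half x = j by apply/round_halfP/andP; split; lra.
  by split => //; rewrite hj above_infP; lra.
have /round_halfP/andP[h1 h2] := hj.
by rewrite hj above_infP; [move=> h; apply/andP; split|]; lra.
Qed.

Lemma cube_itvP (delta : R) j y : 0 < delta ->
  above_itv delta None j y <-> round_half (delta^-1 * y) = j.
Proof. by move=> dp; rewrite above_itvP //; split => [[]|]. Qed.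

Lemma cfrac_aboveP (delta : R) o y : 0 < delta ->
  above o (cfrac (delta^-1 * y)) <-> cfrac_above delta o y.
Proof.
move=> dp; split => [h|[j _ /(above_itvP _ _ _ dp) []//]].
by exists (round_half (delta^-1 * y)) => //; apply/above_itvP.
Qed.

Lemma measurable_cfrac_above (delta : R) o : measurable (cfrac_above delta o).
Proof.
by apply: countable_bigcupT_measurable => // j; exact: measurable_itv.
Qed.

Lemma lebesgue_above_itv (delta : R) o j : 0 < delta ->
  fine (lebesgue_measure (above_itv delta o j)) = above_len o * delta.
Proof.
move=> dp; rewrite lebesgue_measure_itv /= lte_fin ltr_pM2r // ltrD2l /above_len.
by case: ifP => _ /=; [ring | rewrite mul0r].
Qed.

Lemma above_itv_sub_cube (delta : R) o j : 0 < delta ->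
  above_itv delta o j `<=` above_itv delta None j.
Proof. by move=> dp y /(above_itvP _ _ _ dp) [hj _]; apply/cube_itvP. Qed.

Lemma above_itv_cube_disj (delta : R) o j j' : 0 < delta -> j != j' ->
  above_itv delta o j `&` above_itv delta None j' = set0.
Proof.
move=> dp jj'; apply/seteqP; split => // y.
move=> [/(above_itvP _ _ _ dp) [hj _] /(cube_itvP _ _ dp) hj'].
by rewrite -hj hj' eqxx in jj'.
Qed.

Lemma cube_itvE n (delta : R) (m : 'cV[int]_n) (z : 'cV[R]_n) :
  cube delta m z <-> forall i, above_itv delta None (m i 0) (z i 0).
Proof.
split => h i; have := h i; rewrite /above_itv /= in_itv /=; first by move=> [-> ->].
by move/andP.
Qed.

End CenteredFraction.

Section GeneratedSigma.
Variables (d : measure_display) (T : measurableType d) (R : realType).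

Lemma gen_sigma_box (I : finType) (f : I -> T -> R) (B : I -> set R) :
  (forall i, measurable (B i)) -> gen_sigma f [set w | forall i, B i (f i w)].
Proof.
move=> mB; have -> : [set w | forall i, B i (f i w)] = \bigcap_(i in [set: I]) (f i @^-1` B i).
  by apply/seteqP; split => w /= h i; [move=> _; exact: h | exact: h].
pose G := [set A : set T | exists i (B : set R), measurable B /\ A = f i @^-1` B].
suff : measurable (\bigcap_(i in [set: I]) (f i @^-1` B i) : set (g_sigma_algebraType G)) by [].
by apply: fin_bigcap_measurable => // i _; apply: sub_sigma_algebra; exists i, (B i).
Qed.

Lemma gen_sigma_measurable (I : Type) (f : I -> T -> R) :
  (forall i, measurable_fun setT (f i)) -> gen_sigma f `<=` measurable.
Proof.
move=> mf; apply: smallest_sub; first exact: sigma_algebra_measurable.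
by move=> _ [i [B [mB ->]]]; rewrite -[X in measurable X]setTI; exact: mf.
Qed.

Lemma probability_setI_full (P : probability T R) (E U : set T) :
  measurable E -> measurable U -> P U = 1%E -> P (E `&` U) = P E.
Proof.
move=> mE mU PU; rewrite [RHS](measureDI P mE mU) [X in (X + _)%E](_ : _ = 0%E) ?add0e //.
apply: (subset_measure0 (mu := P) (measurableD mE mU) (measurableC mU)); first by move=> w [].
by have := probability_setC P mU; rewrite PU subee.
Qed.

End GeneratedSigma.

Section UniformCubes.
Variables (d : measure_display) (T : measurableType d) (R : realType) (n : nat).
Variables (P : probability T R) (delta : R) (M : seq 'cV[int]_n) (Z : T -> 'cV[R]_n).
Hypotheses (delta_gt0 : 0 < delta) (M_uniq : uniq M) (M_neq0 : M != [::]).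
Hypotheses (Z_rv : random_vector Z) (Z_unif : uniform_on_cubes P Z delta M).

Definition cfrac_above_ev (b : 'I_n -> option R) : set T :=
  [set w | forall r, above (b r) (cfrac (delta^-1 * Z w r 0))].

Definition in_cube (k : 'cV[int]_n) : set T := [set w | cube delta k (Z w)].

Let Zc (i : 'I_n) (w : T) : R := Z w i 0.

Let sum_div_size (c : R) : \sum_(k <- M) (c / (size M)%:R)%:E = c%:E.
Proof.
rewrite sumEFin big_const_seq count_predT iter_addr_0; set s := (size M)%:R.
by rewrite -mulr_natr -/s mulfVK // /s pnatr_eq0 size_eq0.
Qed.

Lemma cfrac_above_evE b :
  cfrac_above_ev b = [set w | forall i, cfrac_above delta (b i) (Zc i w)].
Proof. by apply/seteqP; split => w /= h i; apply/cfrac_aboveP => //; exact: h. Qed.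

Lemma cfrac_above_in_cubeE b k : cfrac_above_ev b `&` in_cube k =
  [set w | forall i, above_itv delta (b i) (k i 0) (Zc i w)].
Proof.
apply/seteqP; split => w /=.
  by move=> [hb /cube_itvE hk] i; apply/above_itvP => //; split; [apply/cube_itvP|].
move=> h; split => [i|]; first by case/(above_itvP _ _ _ delta_gt0): (h i).
by apply/cube_itvE => i; exact: above_itv_sub_cube (h i).
Qed.

Lemma gen_sigma_cfrac_above b : gen_sigma Zc (cfrac_above_ev b).
Proof.
rewrite cfrac_above_evE; apply: (gen_sigma_box (B := fun i => cfrac_above delta (b i))).
by move=> i; exact: measurable_cfrac_above.
Qed.

Lemma gen_sigma_cfrac_above_in_cube b k : gen_sigma Zc (cfrac_above_ev b `&` in_cube k).
Proof.
rewrite cfrac_above_in_cubeE.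
apply: (gen_sigma_box (B := fun i => above_itv delta (b i) (k i 0))) => i.
exact: measurable_itv.
Qed.

Lemma measurable_cfrac_above_ev b : measurable (cfrac_above_ev b).
Proof. exact: (gen_sigma_measurable Z_rv (gen_sigma_cfrac_above b)). Qed.

Lemma measurable_cfrac_above_in_cube b k : measurable (cfrac_above_ev b `&` in_cube k).
Proof. exact: (gen_sigma_measurable Z_rv (gen_sigma_cfrac_above_in_cube b k)). Qed.

Lemma cfrac_above_ev_None : cfrac_above_ev (fun _ => None) = setT.
Proof. by apply/seteqP. Qed.

Lemma measurable_in_cube k : measurable (in_cube k).
Proof.
by have := measurable_cfrac_above_in_cube (fun _ => None) k; rewrite cfrac_above_ev_None setTI.
Qed.

Lemma prob_cfrac_above_in_cube b k : k \in M ->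
  P (cfrac_above_ev b `&` in_cube k) = ((\prod_i above_len (b i)) / (size M)%:R)%:E.
Proof.
move=> kM; rewrite cfrac_above_in_cubeE.
rewrite (@Z_unif (fun i => above_itv delta (b i) (k i 0))) => [|i]; last exact: measurable_itv.
have cube_m m : m != k -> \prod_i
    fine (lebesgue_measure (above_itv delta (b i) (k i 0) `&` above_itv delta None (m i 0))) = 0.
  move=> mk; have /existsP[i mki] : [exists i, m i 0 != k i 0].
    apply: contraNT mk => /existsPn mk; apply/eqP/matrixP => i j.
    by rewrite (ord1 j); apply/eqP/negPn.
  by rewrite (bigD1 i) //= above_itv_cube_disj 1?eq_sym // measure0 mul0r.
rewrite (bigD1_seq k) //= [X in _ + X]big1_seq => [|m /andP[mk _]]; last exact: cube_m.
rewrite (eq_bigr (fun i => above_len (b i) * delta)) => [|i _]; last first.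
  by rewrite setIidl; [exact: lebesgue_above_itv | exact: above_itv_sub_cube].
have M0 : (size M)%:R != 0 :> R by rewrite pnatr_eq0 size_eq0.
rewrite big_split /= prodr_const card_ord addr0; congr EFin.
by field; rewrite M0 expf_neq0 ?gt_eqF.
Qed.

Lemma prob_in_cube k : k \in M -> P (in_cube k) = ((size M)%:R^-1)%:E.
Proof.
move=> kM; rewrite -[in_cube k]setTI -cfrac_above_ev_None prob_cfrac_above_in_cube //.
by rewrite big1 ?mul1r // => i _; rewrite /above_len /=; case: ifP => //; lra.
Qed.

Lemma in_cube_trivIset : trivIset setT in_cube.
Proof.
apply/trivIsetP => k k' _ _ kk'; apply/seteqP; split => // w [].
move=> /cube_itvE hk /cube_itvE hk'; apply/(negP kk')/eqP/matrixP => i j.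
rewrite (ord1 j); have /(cube_itvP _ _ delta_gt0) <- := hk i.
by have /(cube_itvP _ _ delta_gt0) <- := hk' i.
Qed.

Lemma measurable_cubes : measurable (\bigcup_(k in [set` M]) in_cube k).
Proof. by apply: fin_bigcup_measurable => // k _; exact: measurable_in_cube. Qed.

Lemma prob_cubes : P (\bigcup_(k in [set` M]) in_cube k) = 1%E.
Proof.
rewrite (measure_fin_bigcup P (finite_seq M) (sub_trivIset (subsetT _) in_cube_trivIset)).
  rewrite -fsbig_seq // -[RHS](sum_div_size 1).
  by apply: eq_big_seq => k kM; rewrite div1r; exact: prob_in_cube.
by move=> k _; exact: measurable_in_cube.
Qed.

Lemma prob_split_cubes (E : set T) : measurable E ->
  P E = \sum_(k <- M) P (E `&` in_cube k).
Proof.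
move=> mE; rewrite -(probability_setI_full mE measurable_cubes prob_cubes) setI_bigcupr.
have trivI : trivIset [set` M] (fun k => E `&` in_cube k).
  by apply: trivIset_setIl; apply: sub_trivIset (subsetT _) in_cube_trivIset.
have mEcube k : [set` M] k -> measurable (E `&` in_cube k).
  by move=> _; apply: measurableI mE (measurable_in_cube k).
by rewrite (measure_fin_bigcup P (finite_seq M) trivI mEcube) -fsbig_seq.
Qed.

Lemma prob_cfrac_above b : P (cfrac_above_ev b) = (\prod_i above_len (b i))%:E.
Proof.
rewrite prob_split_cubes; last exact: measurable_cfrac_above_ev.
rewrite -sum_div_size; apply: eq_big_seq => k kM.
exact: prob_cfrac_above_in_cube.
Qed.

End UniformCubes.

Lemma measurable_above (R : realType) (o : option R) : measurable [set x : R | above o x].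
Proof.
case: o => [a|] /=; last by rewrite (_ : [set _ | _] = setT) //; apply/seteqP.
rewrite (_ : [set _ | _] = `[a, +oo[%classic); first exact: measurable_itv.
by apply/seteqP; split => x /=; rewrite in_itv /= andbT.
Qed.

Section FracParam.
Variables (d : measure_display) (T : measurableType d) (R : realType) (n : nat).
Variable L : T -> 'M[R]_n.
Hypothesis L_rm : random_matrix L.

Definition mx_above_ev (a : 'I_n -> 'I_n -> option R) : set T :=
  [set w | forall r s, above (a r s) (L w r s)].

Let Lc (rs : 'I_n * 'I_n) (w : T) : R := L w rs.1 rs.2.

Lemma gen_sigma_mx_above a : gen_sigma Lc (mx_above_ev a).
Proof.
have -> : mx_above_ev a = [set w | forall rs, [set x | above (a rs.1 rs.2) x] (Lc rs w)].
  by apply/seteqP; split => w /= h => [[r s]|r s]; [exact: h | exact: (h (r, s))].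
apply: (gen_sigma_box (B := fun rs => [set x | above (a rs.1 rs.2) x])) => rs.
exact: measurable_above.
Qed.

Lemma measurable_mx_above a : measurable (mx_above_ev a).
Proof.
exact: (gen_sigma_measurable (f := Lc) (fun rs => L_rm rs.1 rs.2) (gen_sigma_mx_above a)).
Qed.

Definition frac_param (delta : R) (Z : T -> 'cV[R]_n) (w : T) : Param R n :=
  (L w, map_mx (@cfrac R) (delta^-1 *: Z w)).

Lemma frac_param_rect delta Z a b :
  frac_param delta Z @^-1` rect a b = mx_above_ev a `&` cfrac_above_ev delta Z b.
Proof. by apply/seteqP; split => w /= [h1 h2]; split => // r; have := h2 r; rewrite !mxE. Qed.

Lemma measurable_frac_param delta Z : 0 < delta -> random_vector Z ->
  measurable_fun setT (frac_param delta Z).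
Proof.
move=> dp Z_rv; apply: (@measurability _ _ _ (Param R n) setT _ (@rects R n) erefl).
move=> _ [_ [a [b ->]] <-].
rewrite setTI frac_param_rect; apply: measurableI; first exact: measurable_mx_above.
exact: measurable_cfrac_above_ev.
Qed.

End FracParam.

(* The measure instance of [pushforward mu f] depends on a proof that [f] is measurable,
   so it cannot be found by inference. *)
Definition image_measure d d' (T1 : measurableType d) (T2 : measurableType d')
    (R : realType) (mu : {measure set T1 -> \bar R}) (f : T1 -> T2)
    (mf : measurable_fun setT f) : {measure set T2 -> \bar R} :=
  measure_function_pushforward__canonical__measure_function_Measure mu mf.

Section LawOfFracParam.
Variables (d : measure_display) (T : measurableType d) (R : realType) (n : nat).
Variables (P : probability T R) (delta1 delta2 : R) (M1 M2 : seq 'cV[int]_n).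
Variables (L : T -> 'M[R]_n) (X Y : T -> 'cV[R]_n).
Hypotheses (delta1_gt0 : 0 < delta1) (delta2_gt0 : 0 < delta2).
Hypotheses (M1_uniq : uniq M1) (M1_neq0 : M1 != [::]).
Hypotheses (M2_uniq : uniq M2) (M2_neq0 : M2 != [::]).
Hypotheses (L_rm : random_matrix L) (X_rv : random_vector X) (Y_rv : random_vector Y).
Hypotheses (LX_indep : indep_mx_vec P L X) (LY_indep : indep_mx_vec P L Y).
Hypotheses (X_unif : uniform_on_cubes P X delta1 M1).
Hypotheses (Y_unif : uniform_on_cubes P Y delta2 M2).
Variable m : 'cV[int]_n.
Hypothesis m_M1 : m \in M1.

Let phiX := frac_param L delta1 X.
Let phiY := frac_param L delta2 Y.

Lemma law_frac_param_rect a b : P (phiY @^-1` rect a b) =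
  ((size M1)%:R%:E * P (phiX @^-1` rect a b `&` in_cube delta1 X m))%E.
Proof.
rewrite !frac_param_rect -setIA.
rewrite (LY_indep (gen_sigma_mx_above a) (gen_sigma_cfrac_above delta2_gt0 b)).
rewrite (LX_indep (gen_sigma_mx_above a) (gen_sigma_cfrac_above_in_cube delta1_gt0 b m)).
rewrite (prob_cfrac_above delta2_gt0 M2_uniq M2_neq0 Y_rv Y_unif).
rewrite (prob_cfrac_above_in_cube delta1_gt0 M1_uniq M1_neq0 X_unif _ m_M1).
rewrite -(fineK (fin_num_measure P _ (measurable_mx_above L_rm a))) -!EFinM.
have M0 : (size M1)%:R != 0 :> R by rewrite pnatr_eq0 size_eq0.
by congr EFin; field.
Qed.

Lemma law_frac_param (S : set (Param R n)) : measurable S ->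
  P (phiY @^-1` S) = ((size M1)%:R%:E * P (phiX @^-1` S `&` in_cube delta1 X m))%E.
Proof.
have mphiY := measurable_frac_param L_rm delta2_gt0 Y_rv.
have mphiX := measurable_frac_param L_rm delta1_gt0 X_rv.
have mcube := measurable_in_cube delta1_gt0 X_rv m.
have rectT : @rects R n setT.
  by exists (fun _ _ => None), (fun _ => None); apply/seteqP.
have cover : \bigcup_(k : nat) [set: Param R n] = setT.
  by apply/seteqP; split => // w _; exists 0%N.
move=> mS; pose lawY := image_measure P mphiY.
pose lawX : {measure set (Param R n) -> \bar R} :=
  mscale (NngNum (ler0n R (size M1))) (image_measure (mrestr P mcube) mphiX).
have lawYX A : rects A -> lawY A = lawX A by move=> [a [b ->]]; exact: law_frac_param_rect.
have lawY_fin (k : nat) : (lawY setT < +oo)%E.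
  by rewrite /lawY /= /pushforward preimage_setT probability_setT ltry.
exact: (@measure_unique _ R (Param R n) _ (fun=> setT) erefl (@rects_setI_closed R n)
  (fun=> rectT) cover lawY lawX lawYX lawY_fin S mS).
Qed.

End LawOfFracParam.

Theorem theorem9 (R : realType) (n : nat) (nrm : 'cV[R]_n -> R)
  (d : measure_display) (T : measurableType d) (P : probability T R)
  (delta1 delta2 : R) (M1 M2 : seq 'cV[int]_n)
  (L : T -> 'M[R]_n) (X Y : T -> 'cV[R]_n) :
  is_norm nrm ->
  0 < delta1 -> 0 < delta2 ->
  uniq M1 -> M1 != [::] -> uniq M2 -> M2 != [::] ->
  random_affine_contraction P nrm L X ->
  random_affine_contraction P nrm L Y ->
  uniform_on_cubes P X delta1 M1 ->
  uniform_on_cubes P Y delta2 M2 ->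
  forall m, m \in M1 ->
  forall A : set nat,
    P [set w | A (Mcard delta2 (L w) (Y w))] =
    (fine (P ([set w | A (Mcard delta1 (L w) (X w))] `&` [set w | cube delta1 m (X w)]))
     / fine (P [set w | cube delta1 m (X w)]))%:E.
Proof.
move=> _ delta1_gt0 delta2_gt0 M1_uniq M1_neq0 M2_uniq M2_neq0 [L_rm X_rv LX_indep _]
  [_ Y_rv LY_indep _] X_unif Y_unif m m_M1 A.
have Mcard_ev delta Z : 0 < delta -> [set w | A (Mcard delta (L w) (Z w))] =
    frac_param L delta Z @^-1` [set w | A (nperiodic w.1 w.2)].
  by move=> dp; apply/seteqP; split => w /=; rewrite Mcard_cfrac ?gt_eqF.
have mA := @measurable_nperiodic R n A.
rewrite !Mcard_ev // (law_frac_param delta1_gt0 delta2_gt0 M1_uniq M1_neq0 M2_uniq M2_neq0 L_rm X_rv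
  Y_rv LX_indep LY_indep X_unif Y_unif m_M1 mA).
rewrite (prob_in_cube delta1_gt0 M1_uniq M1_neq0 X_unif m_M1) /= invrK.
have mE : measurable (frac_param L delta1 X @^-1` [set w | A (nperiodic w.1 w.2)]
    `&` in_cube delta1 X m).
  apply: measurableI (measurable_in_cube delta1_gt0 X_rv m).
  by rewrite -[X in measurable X]setTI; apply: measurable_frac_param.
by rewrite -{1}(fineK (fin_num_measure P _ mE)) -EFinM mulrC.
Qed.
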